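(* Let $C<\infty$. For each $n$, let $X_1,\dots,X_n$ be independent random variables taking values in $[0,1]$, where each $X_i$ has a continuous density $f_{X_i}$ with $\sup_x f_{X_i}(x)\le C$ ($C$ independent of $n$ and $i$). Let $X_{(1)}\le\dots\le X_{(n)}$ be the order statistics and $T=\min_{1\le i\le n-1}(X_{(i+1)}-X_{(i)})$. Then for every $\eta>0$ and every $x>0$, \[ \Pr\big(n^{2+\eta}T>x\big)\to1\quad(n\to\infty), \] i.e. $n^{2+\eta}T\to\infty$ in probability. *)

From HB Require Import structures.
From mathcomp Require Import all_boot all_order all_algebra.
From mathcomp Require Import all_classical all_reals all_analysis.
Set Implicit Arguments. Unset Strict Implicit. Unset Printing Implicit Defensive.
Import Order.TTheory GRing.Theory Num.Theory.
Import numFieldNormedType.Exports.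
Local Open Scope classical_set_scope.
Local Open Scope ring_scope.

(* Mutual independence of a finite family of real random variables:
   the product rule holds for every choice of Borel sets (taking B i = setT
   recovers the product rule for every subfamily). *)
Definition mutually_independent {d} {Ω : measurableType d} {R : realType}
  (P : probability Ω R) (n : nat) (X : 'I_n -> Ω -> R) : Prop :=
  forall B : 'I_n -> set R, (forall i, measurable (B i)) ->
    P (\bigcap_(i in [set: 'I_n]) (X i @^-1` B i)) =
    (\prod_(i < n) P (X i @^-1` B i))%E.

Definition is_density {d} {Ω : measurableType d} {R : realType}
  (P : probability Ω R) (X : Ω -> R) (f : R -> R) : Prop :=
  (forall y, 0 <= f y) /\
  forall B : set R, measurable B ->
    P (X @^-1` B) = (\int[lebesgue_measure]_(y in B) (f y)%:E)%E.

(* Minimum spacing of a sequence of reals: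
   sort s increasingly into s_(0) <= ... <= s_(m-1) and return
   min_{i < m-1} (s_(i+1) - s_(i)); by convention 0 if m <= 1. *)
Definition min_spacing {R : realType} (s : seq R) : R :=
  let t := sort <=%R s in
  let sp := [seq nth 0 t i.+1 - nth 0 t i | i <- iota 0 (size t).-1] in
  match sp with
  | [::] => 0
  | h :: tl => foldr Num.min h tl
  end.

Definition T_stat {R : realType} {Ω : Type} (n : nat) (X : 'I_n -> Ω -> R)
  (ω : Ω) : R := min_spacing [seq X i ω | i <- enum 'I_n].

From HB Require Import structures.
From mathcomp Require Import all_boot all_order all_algebra.
From mathcomp Require Import all_classical all_reals all_analysis.
From mathcomp Require Import ring lra zify.
Import Order.TTheory GRing.Theory Num.Theory.
Import numFieldNormedType.Exports.
Local Open Scope classical_set_scope.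
Local Open Scope ring_scope.

(* Two distinct coordinates X_i, X_j are within distance t of each other with
   probability at most 6 C^2 t: the event is covered by the floor(1/t) + 1
   rectangles {X_i in [kt, (k+1)t[, X_j in [(k-1)t, (k+2)t]}, each of
   probability at most (C t) (3 C t) by independence and the density bound.
   A union bound over the n^2 pairs gives P(T <= t) <= 6 C^2 n^2 t, which for
   t = x / n^(2+eta) is 6 C^2 x / n^eta -> 0. *)

Set Implicit Arguments.
Unset Strict Implicit.
Unset Printing Implicit Defensive.

Lemma perm_pairwise_sym (T : eqType) (r : rel T) (s1 s2 : seq T) :
  symmetric r -> perm_eq s1 s2 -> pairwise r s1 -> pairwise r s2.
Proof.
move=> r_sym; elim: s1 s2 => [|x s1 IH] s2; first by rewrite perm_sym => /perm_nilP ->.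
move=> s1_s2 /= /andP[rx r1]; have x_s2 : x \in s2 by rewrite -(perm_mem s1_s2) mem_head.
case/splitPr: x_s2 s1_s2 => t1 t2 s1_s2; have s1_t : perm_eq s1 (t1 ++ t2).
  by rewrite -(perm_cons x) (perm_trans s1_s2) // -cat1s perm_catCA.
have /and3P[r12 r_t1 r_t2] : [&& allrel r t1 t2, pairwise r t1 & pairwise r t2].
  by rewrite -pairwise_cat (IH _ s1_t).
have /andP[rx1 rx2] : all (r x) t1 && all (r x) t2 by rewrite -all_cat -(perm_all _ s1_t).
rewrite pairwise_cat /= r_t1 rx2 r_t2 !andbT allrel_consr r12 andbT.
by apply/allP => y /(allP rx1); rewrite r_sym.
Qed.

Lemma lt_foldr_min (R : realDomainType) (t h : R) (s : seq R) :
  (t < foldr Num.min h s) = all (fun y => t < y) (h :: s).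
Proof. by elim: s => [|y s IH] /=; rewrite ?andbT // lt_min IH /= andbCA. Qed.

Lemma lt_min_spacing (R : realType) (t : R) (s : seq R) : (1 < size s)%N ->
  (t < min_spacing s) = pairwise (fun u v => t < `|u - v|) s.
Proof.
move=> s_gt1; rewrite /min_spacing; set u := sort _ s.
have u_sorted : sorted <=%R u by apply: sort_sorted; exact: le_total.
have le_nth i j : (i <= j < size u)%N -> nth 0 u i <= nth 0 u j.
  case/andP=> ij ju; apply: (sorted_leq_nth le_trans le_refl) => //.
  by rewrite inE /= (leq_ltn_trans ij).
have dist_sym : symmetric (fun u v : R => t < `|u - v|) by move=> a b; rewrite distrC.
have -> : pairwise (fun u v => t < `|u - v|) s = pairwise (fun u v => t < `|u - v|) u.
  by apply/idP/idP; apply: perm_pairwise_sym; rewrite // ?perm_sort // perm_sym perm_sort.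
have -> : (t < match [seq nth 0 u i.+1 - nth 0 u i | i <- iota 0 (size u).-1] with
         | [::] => 0 | h :: tl => foldr Num.min h tl end) =
    all (fun i => t < nth 0 u i.+1 - nth 0 u i) (iota 0 (size u).-1).
  by move: s_gt1; rewrite -(size_sort <=%R) -/u; case: (size u) => [|[|k]] // _;
     rewrite /= lt_foldr_min /= all_map.
apply/allP/(pairwiseP 0) => [gap i j | far i]; rewrite ?inE ?mem_iota /=.
  move=> iu ju ij; have i_gap : (i < (size u).-1)%N by lia.
  have ij_u : (i <= j < size u)%N by lia.
  have i1j_u : (i.+1 <= j < size u)%N by lia.
  rewrite distrC ger0_norm ?subr_ge0 ?le_nth //.
  by apply: lt_le_trans (gap i _) _; rewrite ?mem_iota ?lerD2r ?le_nth.
move=> i_gap; have ii1_u : (i <= i.+1 < size u)%N by lia.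
have := far i i.+1; rewrite !inE /= => /(_ ltac:(lia) ltac:(lia) (ltnSn i)).
by rewrite distrC ger0_norm // subr_ge0 le_nth.
Qed.

Lemma lt_T_stat (R : realType) (Ω : Type) n (X : 'I_n -> Ω -> R) ω (t : R) :
  (1 < n)%N ->
  (t < T_stat X ω) <-> (forall a b : 'I_n, (a < b)%N -> t < `|X a ω - X b ω|).
Proof.
move=> n_gt1; have i0 : 'I_n := Ordinal (ltnW n_gt1).
rewrite /T_stat lt_min_spacing ?pairwise_map -?enumT; last by rewrite size_map size_enum_ord.
split=> [/(pairwiseP i0) far a b ab | near_ab].
  by have := far a b; rewrite !inE size_enum_ord !nth_ord_enum; apply.
apply/(pairwiseP i0) => i j; rewrite !inE size_enum_ord => i_n j_n ij.
by apply: near_ab; rewrite !nth_enum_ord.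
Qed.

Section measure_bounds.
Context d (T : measurableType d) (R : realType).
Variable mu : {measure set T -> \bar R}.
Local Open Scope ereal_scope.

(* Densities are not assumed measurable; monotonicity still holds because the
   integral of a nonnegative function is a supremum over simple minorants. *)
Lemma ge0_le_integral_nonmeasurable (D : set T) (f1 f2 : T -> \bar R) :
  (forall x, D x -> 0 <= f1 x) -> (forall x, D x -> f1 x <= f2 x) ->
  \int[mu]_(x in D) f1 x <= \int[mu]_(x in D) f2 x.
Proof.
move=> f1_ge0 f12; have f2_ge0 x : D x -> 0 <= f2 x.
  by move=> Dx; exact: le_trans (f1_ge0 x Dx) (f12 x Dx).
rewrite !ge0_integralE //; apply: ereal_sup_le => _ [h hf1 <-].
exists h => //= x; apply: le_trans (hf1 x) _.
by rewrite /patch; case: ifP => // /set_mem /f12.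
Qed.

Lemma measure_bigcup_card_le (I : finType) (F : I -> set T) (K : R) :
  (forall i, measurable (F i)) -> (forall i, mu (F i) <= K%:E) ->
  mu (\bigcup_i F i) <= (#|I|%:R * K)%:E.
Proof.
move=> mF FK; have mU : measurable (\bigcup_i F i).
  exact: fin_bigcup_measurable finite_finset (fun i _ => mF i).
apply: le_trans (content_sub_fsum _ finite_finset (fun i _ => mF i) mU (@subset_refl _ _)) _.
rewrite (fsbigE _ _ (enum_uniq I)) //; last by move=> i _; rewrite mem_enum.
rewrite (eq_bigl xpredT) ?big_enum; last by move=> i; rewrite in_setT.
by rewrite mulr_natl -sumr_const -sumEFin; apply: lee_sum => i _; exact: FK.
Qed.

End measure_bounds.

Lemma near_pair_grid (R : realType) (t u v : R) : 0 < t -> 0 <= u <= 1 -> `|u - v| <= t ->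
  exists2 k : 'I_(Num.truncn t^-1).+1,
    k%:R * t <= u < k.+1%:R * t & (k%:R - 1) * t <= v <= (k%:R + 2) * t.
Proof.
move=> t_gt0 /andP[u_ge0 u_le1] uv_t.
have ut_ge0 : 0 <= u / t by rewrite divr_ge0 // ltW.
have /andP[k_le k_gt] := truncn_itv ut_ge0.
have k_M : (Num.truncn (u / t) < (Num.truncn t^-1).+1)%N.
  by rewrite ltnS le_truncn // -[leRHS]mul1r ler_pM2r ?invr_gt0.
rewrite ler_pdivlMr // ltr_pdivrMr // in k_le k_gt.
exists (Ordinal k_M); first by rewrite /= k_le k_gt.
move: k_gt uv_t; rewrite /= -natr1 ler_norml => k_gt /andP[? ?].
by apply/andP; split; nra.
Qed.

Section pair_estimates.
Context d (Ω : measurableType d) (R : realType) (P : probability Ω R).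

Lemma measurableT_preimage (Y : Ω -> R) (B : set R) :
  measurable_fun setT Y -> measurable B -> measurable (Y @^-1` B).
Proof. by move=> mY mB; rewrite -[_ @^-1` _]setTI; exact: mY. Qed.

Lemma density_le_lebesgue (Y : Ω -> R) (f : R -> R) (C : R) (B : set R) :
  is_density P Y f -> (forall y, f y <= C) -> measurable B ->
  (P (Y @^-1` B) <= C%:E * lebesgue_measure B)%E.
Proof.
move=> [f_ge0 Pf] f_le_C mB; rewrite Pf // -(integral_cst lebesgue_measure mB).
by apply: ge0_le_integral_nonmeasurable => y _; rewrite lee_fin.
Qed.

Lemma mutually_independent_preimage2 n (X : 'I_n -> Ω -> R) (i j : 'I_n)
    (A B : set R) :
  mutually_independent P X -> i != j -> measurable A -> measurable B ->
  P (X i @^-1` A `&` X j @^-1` B) = (P (X i @^-1` A) * P (X j @^-1` B))%E.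
Proof.
move=> indX ij mA mB; have ji : (j == i) = false by rewrite eq_sym (negbTE ij).
pose Bs k := if k == i then A else if k == j then B else setT.
have mBs k : measurable (Bs k) by rewrite /Bs; case: ifP => //; case: ifP.
have := indX Bs mBs.
have -> : \bigcap_(k in [set: 'I_n]) (X k @^-1` Bs k) = X i @^-1` A `&` X j @^-1` B.
  apply/seteqP; split => w.
    by move=> XB; split; [have := XB i I | have := XB j I]; rewrite /Bs ?eqxx ?ji.
  by move=> [XA XB] k _; rewrite /Bs; case: eqP => [->|_] //; case: eqP => [->|].
move=> ->; rewrite (bigD1 i) //= (bigD1 j) 1?eq_sym //= big1 ?mule1.
  by rewrite /Bs eqxx ji eqxx.
move=> k /andP[ki kj]; rewrite /Bs (negbTE ki) (negbTE kj) preimage_setT.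
exact: probability_setT.
Qed.

Lemma measurable_dist_le (Y Z : Ω -> R) (t : R) :
  measurable_fun setT Y -> measurable_fun setT Z ->
  measurable [set w | `|Y w - Z w| <= t].
Proof.
move=> mY mZ; have mYZ : measurable_fun setT (fun w => `|Y w - Z w|).
  apply: measurableT_comp; first exact: measurable_realfun.normr_measurable.
  exact: measurable_realfun.measurable_funB.
have -> : [set w | `|Y w - Z w| <= t] = (fun w => `|Y w - Z w|) @^-1` `]-oo, t].
  by apply/seteqP; split => w /=; rewrite in_itv.
exact: measurableT_preimage mYZ (measurable_itv _).
Qed.

Lemma prob_dist_le n (X : 'I_n -> Ω -> R) (i j : 'I_n) (fi fj : R -> R) (C t : R) :
  mutually_independent P X -> i != j ->
  measurable_fun setT (X i) -> measurable_fun setT (X j) ->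
  (forall w, 0 <= X i w <= 1) ->
  is_density P (X i) fi -> is_density P (X j) fj ->
  (forall y, fi y <= C) -> (forall y, fj y <= C) -> 0 < t <= 1 ->
  (P [set w | `|X i w - X j w| <= t]%R <= (6 * C ^+ 2 * t)%:E)%E.
Proof.
move=> indX ij mXi mXj Xi01 dens_i dens_j fi_C fj_C /andP[t_gt0 t_le1].
set M := Num.truncn t^-1.
pose I (k : 'I_M.+1) := `[k%:R * t, k.+1%:R * t[%classic.
pose J (k : 'I_M.+1) := `[(k%:R - 1) * t, (k%:R + 2) * t]%classic.
pose G k := X i @^-1` I k `&` X j @^-1` J k.
have mG k : measurable (G k).
  by apply: measurableI; apply: measurableT_preimage => //; exact: measurable_itv.
have lebI k : lebesgue_measure (I k) = t%:E.
  rewrite lebesgue_measure_itv /= lte_fin ltr_pM2r // ltr_nat ltnSn -EFinB.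
  by rewrite -natr1; congr EFin; ring.
have lebJ k : lebesgue_measure (J k) = (3 * t)%:E.
  rewrite lebesgue_measure_itv /= lte_fin ltr_pM2r // ifT; last lra.
  by rewrite -EFinB; congr EFin; ring.
have PG k : (P (G k) <= ((C * t) * (C * (3 * t)))%:E)%E.
  rewrite mutually_independent_preimage2 //; try exact: measurable_itv.
  rewrite EFinM; apply: lee_pmul => //.
    by rewrite EFinM -(lebI k); exact: density_le_lebesgue dens_i fi_C (measurable_itv _).
  by rewrite EFinM -(lebJ k); exact: density_le_lebesgue dens_j fj_C (measurable_itv _).
have cover : [set w | `|X i w - X j w| <= t] `<=` \bigcup_k G k.
  by move=> w /(near_pair_grid t_gt0 (Xi01 w)) [k Ik Jk]; exists k.
have mU : measurable (\bigcup_k G k).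
  exact: fin_bigcup_measurable finite_finset (fun k _ => mG k).
apply: le_trans (le_measure P (mem_set (measurable_dist_le t mXi mXj)) (mem_set mU) cover) _.
apply: le_trans (measure_bigcup_card_le mG PG) _; rewrite card_ord lee_fin.
have M1t : M.+1%:R * t <= 2.
  have Mt : M%:R * t <= 1.
    by rewrite -ler_pdivlMr // div1r /M truncn_le invr_ge0 ltW.
  by rewrite -natr1 mulrDl mul1r; lra.
have -> : (C * t) * (C * (3 * t)) = 3 * C ^+ 2 * t ^+ 2 by ring.
have C2 : 0 <= C ^+ 2 by exact: sqr_ge0.
nra.
Qed.

End pair_estimates.

Lemma T_stat_le_bigcup (R : realType) (Ω : Type) n (X : 'I_n -> Ω -> R) (t : R) :
  (1 < n)%N ->
  [set ω | T_stat X ω <= t] =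
  \bigcup_(p : 'I_n * 'I_n)
    (if (p.1 < p.2)%N then [set ω | `|X p.1 ω - X p.2 ω| <= t] else set0).
Proof.
move=> n_gt1; apply/seteqP; split => ω /=.
  rewrite leNgt => /negP T_le; apply: contrapT => no_pair; apply: T_le.
  apply/lt_T_stat => // a b ab; rewrite ltNge; apply/negP => dist_le.
  by apply: no_pair; exists (a, b); rewrite //= ab.
case=> -[a b] _ /=; case: ifP => // ab dist_le; rewrite leNgt; apply/negP.
by move/lt_T_stat => /(_ n_gt1 a b ab); rewrite ltNge dist_le.
Qed.

Lemma measurable_T_stat_le d (Ω : measurableType d) (R : realType) n
    (X : 'I_n -> Ω -> R) (t : R) :
  (1 < n)%N -> (forall i, measurable_fun setT (X i)) ->
  measurable [set ω | T_stat X ω <= t].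
Proof.
move=> n_gt1 mX; rewrite T_stat_le_bigcup //.
apply: fin_bigcup_measurable finite_finset _ => -[a b] _ /=.
by case: ifP => _; [exact: measurable_dist_le | exact: measurable0].
Qed.

Lemma prob_T_stat_le d (Ω : measurableType d) (R : realType) (P : probability Ω R)
    n (X : 'I_n -> Ω -> R) (C t : R) :
  (1 < n)%N -> (forall i, measurable_fun setT (X i)) -> mutually_independent P X ->
  (forall i ω, 0 <= X i ω <= 1) ->
  (forall i, exists f, is_density P (X i) f /\ forall y, f y <= C) -> 0 < t <= 1 ->
  (P [set ω | T_stat X ω <= t]%R <= (n%:R ^+ 2 * (6 * C ^+ 2 * t))%:E)%E.
Proof.
move=> n_gt1 mX indX X01 densX t_01; rewrite T_stat_le_bigcup //.
apply: le_trans (measure_bigcup_card_le _ _) _; last first.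
  by rewrite card_prod card_ord natrM expr2.
all: move=> -[a b] /=; case: ifP => ab.
- have [fa [dens_a fa_C]] := densX a; have [fb [dens_b fb_C]] := densX b.
  apply: prob_dist_le dens_a dens_b fa_C fb_C t_01 => //.
  by apply/eqP => a_b; move: ab; rewrite a_b ltnn.
- case/andP: t_01 => t_gt0 _; have := sqr_ge0 C.
  by rewrite measure0 lee_fin; nra.
- exact: measurable_dist_le.
- exact: measurable0.
Qed.

Lemma inv_natr_powR_cvg0 (R : realType) (eta : R) : 0 < eta ->
  (fun n : nat => (n%:R `^ eta)^-1) @ \oo --> (0 : R).
Proof.
move=> eta_gt0; apply/cvgr0Pnorm_lt => e e_gt0.
set y := e^-1 `^ eta^-1.
exists (Num.truncn y).+1 => // n /= y_n.
have y_lt_n : y < n%:R by apply: lt_le_trans (truncnS_gt y) _; rewrite ler_nat.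
have n_gt0 : 0 < n%:R :> R by apply: le_lt_trans y_lt_n; exact: powR_ge0.
have y_eta : y `^ eta = e^-1.
  by rewrite -powRrM mulVf ?gt_eqF // powRr1 // ltW // invr_gt0.
have : e^-1 < n%:R `^ eta by rewrite -y_eta gt0_ltr_powR // nnegrE ?powR_ge0 ?ltW.
rewrite ger0_norm ?invr_ge0 ?powR_ge0 // -[e in _ < e]invrK.
by rewrite ltf_pV2 ?posrE ?invr_gt0 ?powR_gt0.
Qed.

Lemma prob_scaled_T_stat_bounds d (Ω : measurableType d) (R : realType)
    (P : probability Ω R) n (X : 'I_n -> Ω -> R) (C eta x : R) :
  (1 < n)%N -> (forall i, measurable_fun setT (X i)) -> mutually_independent P X ->
  (forall i ω, 0 <= X i ω <= 1) ->
  (forall i, exists f, is_density P (X i) f /\ forall y, f y <= C) ->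
  0 < eta -> 0 < x -> x <= n%:R ->
  ((1 - 6 * C ^+ 2 * x * (n%:R `^ eta)^-1)%:E <=
     P [set ω | x < n%:R `^ (2 + eta) * T_stat X ω]%R <= 1)%E.
Proof.
move=> n_gt1 mX indX X01 densX eta_gt0 x_gt0 x_n.
have n_ge1 : 1 <= n%:R :> R by rewrite ler1n ltnW.
have n_eta_ge1 : 1 <= n%:R `^ eta by rewrite -[leLHS](powRr0 n%:R) ler_powR // ltW.
have n_2eta : n%:R `^ (2 + eta) = n%:R ^+ 2 * n%:R `^ eta.
  by rewrite powRD ?powR_mulrn // pnatr_eq0 -lt0n ltnW ?implybT.
set t := x / n%:R `^ (2 + eta).
have N_gt0 : 0 < n%:R `^ (2 + eta) by rewrite n_2eta; nra.
have t_01 : 0 < t <= 1.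
  rewrite divr_gt0 // ler_pdivrMr // mul1r n_2eta /=.
  by apply: le_trans x_n _; nra.
have -> : [set ω | x < n%:R `^ (2 + eta) * T_stat X ω]%R = ~` [set ω | T_stat X ω <= t]%R.
  by apply/seteqP; split => ω /=; rewrite mulrC -ltr_pdivrMr // -/t ltNge => /negP.
have -> : 6 * C ^+ 2 * x * (n%:R `^ eta)^-1 = n%:R ^+ 2 * (6 * C ^+ 2 * t).
  by rewrite /t n_2eta; field; rewrite !gt_eqF ?powR_gt0 // ltr0n ltnW.
have mT : measurable [set ω | T_stat X ω <= t] by exact: measurable_T_stat_le.
rewrite probability_setC // EFinB leeB ?prob_T_stat_le //= leeBlDr ?fin_num_measure //.
by rewrite leeDl ?measure_ge0.
Qed.

Theorem lemma7 (R : realType) (C : R) (d : measure_display)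
  (Ω : nat -> measurableType d) (P : forall n, probability (Ω n) R)
  (X : forall n, 'I_n -> Ω n -> R)
  (hmeas : forall n (i : 'I_n), measurable_fun setT (X n i))
  (hind : forall n, mutually_independent (P n) (X n))
  (hrange : forall n (i : 'I_n) (ω : Ω n), 0 <= X n i ω <= 1)
  (hdens : forall n (i : 'I_n), exists f : R -> R,
      is_density (P n) (X n i) f /\
      {within `[0, 1], continuous f} /\
      (forall y, f y <= C)) :
  forall (eta x : R), 0 < eta -> 0 < x ->
    (fun n => P n [set ω | x < (n%:R) `^ (2 + eta) * T_stat (X n) ω])
      @ \oo --> 1%E.
Proof.
move=> eta x eta_gt0 x_gt0.
have densX n i : exists f, is_density (P n) (X n i) f /\ forall y, f y <= C.
  by have [f [dens [_ f_C]]] := hdens n i; exists f.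
pose b n := 6 * C ^+ 2 * x * (n%:R `^ eta)^-1.
have b_cvg0 : b @ \oo --> (0 : R).
  by rewrite -(mulr0 (6 * C ^+ 2 * x)); apply: cvgM; [exact: cvg_cst | exact: inv_natr_powR_cvg0].
apply: (@squeeze_cvge _ _ _ _ (fun n => (1 - b n)%:E) _ (fun=> 1%E)); last exact: cvg_cst.
- exists (maxn 2 (Num.truncn x).+1) => // n /=; rewrite geq_max => /andP[n_gt1 x_n].
  apply: prob_scaled_T_stat_bounds => //; apply: ltW.
  by apply: lt_le_trans (truncnS_gt x) _; rewrite ler_nat.
- apply/fine_cvgP; split; first by exists 0%N.
  by rewrite -[X in _ --> X]subr0; apply: cvgB => //; exact: cvg_cst.
Qed.
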